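(* Let $r\ge5$ and let $C$ be a graph on $r+1$ vertices that has no vertex cover of size $1$. Let $c_3$ be the number of $3$-element vertex subsets of $C$ that are vertex covers. If \[ 4r-16+\frac{36}{r+2}\le c_3<4r-8, \] then $C$ is the disjoint union of a $K_3$ with isolated vertices, or the disjoint union of a $P_4$ (path on $4$ vertices) with isolated vertices.
   Context: A vertex cover of a graph is a set of vertices meeting every edge. *)

From HB Require Import structures.
From mathcomp Require Import all_boot all_order all_algebra.
Set Implicit Arguments. Unset Strict Implicit. Unset Printing Implicit Defensive.

Definition simple_graph (T : finType) (e : rel T) : Prop :=
  symmetric e /\ irreflexive e.

Definition vertex_cover (T : finType) (e : rel T) (S : {set T}) : bool :=
  [forall x, forall y, e x y ==> (x \in S) || (y \in S)].

Definition num_covers (T : finType) (e : rel T) (k : nat) : nat :=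
  #|[set S : {set T} | (#|S| == k) && vertex_cover e S]|.

Definition K3_plus_isolated (T : finType) (e : rel T) : Prop :=
  exists a b c : T, [/\ a != b, b != c & a != c] /\
    forall x y, e x y <->
      [\/ (x == a) && (y == b) || (x == b) && (y == a),
          (x == b) && (y == c) || (x == c) && (y == b)
        | (x == a) && (y == c) || (x == c) && (y == a)].

Definition P4_plus_isolated (T : finType) (e : rel T) : Prop :=
  exists a b c d : T, uniq [:: a; b; c; d] /\
    forall x y, e x y <->
      [\/ (x == a) && (y == b) || (x == b) && (y == a),
          (x == b) && (y == c) || (x == c) && (y == b)
        | (x == c) && (y == d) || (x == d) && (y == c)].

From HB Require Import structures.
From mathcomp Require Import all_boot all_order all_algebra.
From mathcomp Require Import zify lra.
Import Order.TTheory GRing.Theory Num.Theory.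

(* If no two vertices cover C, every 3-cover is reached by choosing, three
   times, an endpoint of an edge not yet covered, so c_3 <= 8, which is below
   the lower bound.  Otherwise fix a 2-cover {u, v} and sort the 3-covers S by
   I = S :&: {u, v}: with O = {u, v} :\: I, they are exactly the 3-sets
   containing I and all neighbours of O while avoiding O.  Counting these four
   blocks gives c_3 <= 2n - 3 with n = r + 1 (again below the lower bound)
   unless u or v has a single neighbour outside {u, v}; then the graph is K_3
   or P_4 plus isolated vertices, or two disjoint edges, for which
   c_3 = 4n - 12 violates the upper bound. *)

Set Implicit Arguments.
Unset Strict Implicit.
Unset Printing Implicit Defensive.

Section SupersetCount.
Variable T : finType.

Lemma card_supersets_le1 (X : {set T}) (P : pred {set T}) k : k <= #|X| ->
  #|[set S : {set T} | [&& #|S| == k, X \subset S & P S]]| <= 1.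
Proof.
move=> le_kX; rewrite -(cards1 X); apply/subset_leq_card/subsetP => S.
by rewrite !inE => /and3P [/eqP cS XS _]; rewrite eq_sym eqEcard XS cS.
Qed.

Lemma card_supersets_succ (X O : {set T}) k : #|X| = k -> [disjoint X & O] ->
  #|[set S : {set T} | [&& #|S| == k.+1, X \subset S & [disjoint S & O]]]|
    = #|T| - k - #|O|.
Proof.
move=> cX dXO.
have -> : [set S : {set T} | [&& #|S| == k.+1, X \subset S & [disjoint S & O]]]
          = [set w |: X | w in ~: (X :|: O)].
  apply/setP => S; rewrite inE; apply/and3P/imsetP => [[/eqP cS XS dSO]|[w]].
    have : 0 < #|S :\: X| by rewrite cardsD (setIidPr XS) cS cX subSnn.
    case/card_gt0P => w; rewrite inE => /andP [wX wS]; exists w.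
      by rewrite !inE negb_or wX (disjointFr dSO wS).
    apply/eqP; rewrite eq_sym eqEcard subUset sub1set wS XS cardsU1 wX cX cS.
    by rewrite leqnn.
  rewrite !inE negb_or => /andP [wX wO] ->; split.
  - by rewrite cardsU1 wX cX.
  - exact: subsetUr.
  - by rewrite -setI_eq0 setIUl (disjoint_setI0 dXO) setU0 setI_eq0 disjoints1.
rewrite card_in_imset => [|w1 w2]; last first.
  rewrite !inE !negb_or => /andP [w1X _] _ E.
  by move: (setU11 w1 X); rewrite E in_setU1 (negbTE w1X) orbF => /eqP.
rewrite cardsCs setCK cardsU (disjoint_setI0 dXO) cards0 subn0 cX.
by rewrite subnDA.
Qed.

Lemma card_setU1 (x : T) (A : {set T}) : #|x |: A| = (#|A :\ x|).+1.
Proof. by rewrite cardsU1 (cardsD1 x A); case: (x \in A). Qed.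

End SupersetCount.

Section VertexCovers.
Variables (T : finType) (e : rel T).

Lemma vertex_coverP (S : {set T}) :
  reflect (forall x y, e x y -> (x \in S) || (y \in S)) (vertex_cover e S).
Proof.
apply: (iffP forallP) => [cS x y exy|cS x].
  by move/forallP: (cS x) => /(_ y); rewrite exy.
by apply/forallP => y; apply/implyP; exact: cS.
Qed.

Lemma vertex_coverS (S S' : {set T}) :
  S \subset S' -> vertex_cover e S -> vertex_cover e S'.
Proof.
move=> sSS' /vertex_coverP cS; apply/vertex_coverP => x y /cS /orP [] inS;
  by rewrite (subsetP sSS' _ inS) ?orbT.
Qed.

Definition uncovered_edge (X : {set T}) : option (T * T) :=
  [pick p : T * T | [&& e p.1 p.2, p.1 \notin X & p.2 \notin X]].

Lemma uncovered_edgeP (X : {set T}) : ~~ vertex_cover e X ->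
  exists x y, uncovered_edge X = Some (x, y) /\ [&& e x y, x \notin X & y \notin X].
Proof.
rewrite /uncovered_edge; case: pickP => [[x y] exy _|none]; first by exists x, y.
case/negP; apply/vertex_coverP => x y exy.
by move: (none (x, y)); rewrite /= exy /= => /negbT; rewrite negb_and !negbK.
Qed.

(* The bounded search tree: [bs] records which endpoint of the first edge not
   yet covered by the previous choices is added next. *)
Fixpoint branch (bs : seq bool) : {set T} :=
  if bs is b :: bs' then
    if uncovered_edge (branch bs') is Some (x, y) then
      (if b then x else y) |: branch bs'
    else branch bs'
  else set0.

Section NoSmallCover.
Variable k : nat.
Hypothesis no_small_cover : forall X : {set T}, #|X| < k -> ~~ vertex_cover e X.

Lemma branch_sub_cover (S : {set T}) m : vertex_cover e S -> m <= k ->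
  exists bs, [/\ size bs = m, branch bs \subset S & #|branch bs| = m].
Proof.
move=> /vertex_coverP cS; elim: m => [_|m IHm lt_mk].
  by exists [::]; rewrite sub0set cards0.
have [bs [size_bs sub_bs card_bs]] := IHm (ltnW lt_mk).
have ncov : ~~ vertex_cover e (branch bs) by apply: no_small_cover; rewrite card_bs.
have [x [y [Exy /and3P [exy xN yN]]]] := uncovered_edgeP ncov.
have /orP [xS|yS] := cS x y exy; [exists (true :: bs)|exists (false :: bs)];
  by rewrite /= Exy size_bs subUset sub1set ?xS ?yS sub_bs cardsU1 ?xN ?yN card_bs.
Qed.

Lemma num_covers_le_exp2 : num_covers e k <= 2 ^ k.
Proof.
rewrite -[2]card_bool -card_tuple -cardsT.
apply: leq_trans (leq_imset_card (fun t : k.-tuple bool => branch t) _).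
apply/subset_leq_card/subsetP => S; rewrite inE => /andP [/eqP cS coverS].
have [bs [/eqP size_bs sub_bs card_bs]] := branch_sub_cover coverS (leqnn k).
apply/imsetP; exists (Tuple size_bs) => //=.
by apply/esym/eqP; rewrite eqEcard sub_bs cS card_bs /=.
Qed.

End NoSmallCover.
End VertexCovers.

Section CoverBlocks.
Variables (T : finType) (e : rel T).
Hypothesis e_sym : symmetric e.

Definition nbhd (O : {set T}) : {set T} := [set y | [exists x in O, e x y]].

Lemma in_nbhd1 x y : (y \in nbhd [set x]) = e x y.
Proof.
rewrite inE; apply/existsP/idP => [[z /andP [/set1P -> //]]|exy].
by exists x; rewrite set11.
Qed.

Lemma nbhdU (A B : {set T}) : nbhd (A :|: B) = nbhd A :|: nbhd B.
Proof.
apply/setP => y; rewrite !inE; apply/existsP/orP => [[x]|[]/existsP[x]].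
- by rewrite inE => /andP [/orP [] xAB exy]; [left|right];
    apply/existsP; exists x; rewrite xAB.
- by case/andP => xA exy; exists x; rewrite inE xA.
- by case/andP => xB exy; exists x; rewrite inE xB orbT.
Qed.

(* A 3-cover containing [I] and avoiding [O] must contain every neighbour of
   [O]; when [I :|: O] is a cover this is also sufficient. *)
Definition forced (I O : {set T}) : {set T} := I :|: nbhd O.

Definition cover3_block (I O : {set T}) : {set {set T}} :=
  [set S : {set T} | [&& #|S| == 3, vertex_cover e S, I \subset S & [disjoint S & O]]].

Lemma forced_sub_cover (I O S : {set T}) :
  vertex_cover e S -> I \subset S -> [disjoint S & O] -> forced I O \subset S.
Proof.
move=> /vertex_coverP cS IS dSO; rewrite subUset IS; apply/subsetP => y.
rewrite inE => /existsP [x /andP [xO exy]].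
by case/orP: (cS x y exy) => // xS; rewrite (disjointFr dSO xS) in xO.
Qed.

Lemma vertex_cover_forced (I O S : {set T}) :
  vertex_cover e (I :|: O) -> forced I O \subset S -> vertex_cover e S.
Proof.
move=> /vertex_coverP cIO /subsetP sFS; apply/vertex_coverP => x y exy.
have forcedS z w : e z w -> z \in I :|: O -> (z \in S) || (w \in S).
  rewrite inE => ezw /orP [zI|zO]; first by rewrite sFS ?inE ?zI.
  by rewrite (sFS w) ?orbT // !inE; apply/orP; right; apply/existsP; exists z; rewrite zO.
case/orP: (cIO x y exy) => [/(forcedS _ _ exy) //|yIO].
by rewrite orbC; apply: forcedS yIO; rewrite e_sym.
Qed.

Lemma cover3_blockE (I O : {set T}) : vertex_cover e (I :|: O) ->
  cover3_block I O =
    [set S : {set T} | [&& #|S| == 3, forced I O \subset S & [disjoint S & O]]].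
Proof.
move=> cIO; apply/setP => S; rewrite !inE.
apply/and4P/and3P => [[cS coverS IS dSO]|[cS FS dSO]].
  by rewrite cS forced_sub_cover.
split=> //; first exact: vertex_cover_forced FS.
by apply: subset_trans FS; apply: subsetUl.
Qed.

Lemma cover3_block_eq0 (I O : {set T}) :
  ~~ [disjoint forced I O & O] -> cover3_block I O = set0.
Proof.
move=> meetFO; apply/setP => S; rewrite !inE; apply/negP => /and4P [_ coverS IS dSO].
by case/negP: meetFO; apply: disjointWl (forced_sub_cover coverS IS dSO) dSO.
Qed.

Lemma card_cover3_block_le1 (I O : {set T}) :
  vertex_cover e (I :|: O) -> 3 <= #|forced I O| -> #|cover3_block I O| <= 1.
Proof. by move=> cIO F_ge3; rewrite cover3_blockE //; apply: card_supersets_le1. Qed.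

Lemma card_cover3_block (I O : {set T}) :
  vertex_cover e (I :|: O) -> #|forced I O| = 2 -> [disjoint forced I O & O] ->
  #|cover3_block I O| = #|T| - 2 - #|O|.
Proof. by move=> cIO cF dFO; rewrite cover3_blockE //; apply: card_supersets_succ. Qed.

Lemma num_covers3_split (u v : T) : num_covers e 3 =
  #|cover3_block [set u; v] set0| + #|cover3_block [set u] [set v]|
  + #|cover3_block [set v] [set u]| + #|cover3_block set0 [set u; v]|.
Proof.
rewrite /num_covers -(cardsID [set S : {set T} | u \in S]).
rewrite -(cardsID [set S : {set T} | v \in S] (_ :&: _)).
rewrite -(cardsID [set S : {set T} | v \in S] (_ :\: [set S : {set T} | u \in S])).
rewrite !addnA.
congr (_ + _ + _ + _); apply: eq_card => S;
  rewrite !inE ?subUset ?sub1set ?sub0set -?setI_eq0 ?setI0 ?setIUr ?setU_eq0;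
  rewrite ?setI_eq0 ?(disjoint_sym S) ?disjoints1 ?eqxx;
  by case: (#|S| == 3); case: (vertex_cover e S); case: (u \in S); case: (v \in S).
Qed.

End CoverBlocks.

Section TwoVertexCover.
Variables (T : finType) (e : rel T).
Hypotheses (e_sym : symmetric e) (e_irr : irreflexive e).

Lemma nbhd0 : nbhd e set0 = set0.
Proof. by apply/setP => y; rewrite !inE; apply/existsP => -[x]; rewrite inE. Qed.

Lemma nbhdD1_id (u v : T) : ~~ e u v -> nbhd e [set u] :\ v = nbhd e [set u].
Proof.
move=> nuv; apply/setP => y; rewrite in_setD1 in_nbhd1.
by case: eqVneq => // ->; rewrite (negbTE nuv).
Qed.

Lemma two_le_card_forced (I O : {set T}) :
  (forall S : {set T}, #|S| <= 1 -> ~~ vertex_cover e S) ->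
  vertex_cover e (I :|: O) -> 2 <= #|forced e I O|.
Proof.
move=> no1 cIO; rewrite ltnNge; apply/negP => /no1/negP; apply.
exact: vertex_cover_forced cIO (subxx _).
Qed.

Section Blocks.
Variables u v : T.
Hypotheses (uv : u != v) (cov : vertex_cover e [set u; v]).

Lemma card_cover3_block_in2 : #|cover3_block e [set u; v] set0| = #|T| - 2.
Proof.
rewrite card_cover3_block ?setU0 ?cards0 ?subn0 //;
  by rewrite /forced nbhd0 setU0 ?cards2 ?uv // -setI_eq0 setI0.
Qed.

Lemma forced_out1_notin : v \notin forced e [set u] [set v].
Proof. by rewrite !in_setU in_set1 in_nbhd1 e_irr eq_sym (negbTE uv). Qed.

Lemma card_cover3_block_out1 : #|nbhd e [set v] :\ u| = 1 ->
  #|cover3_block e [set u] [set v]| = #|T| - 3.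
Proof.
move=> cB; rewrite card_cover3_block ?cards1 -?subnDA //.
  by rewrite /forced card_setU1 cB.
by rewrite disjoint_sym disjoints1 forced_out1_notin.
Qed.

Lemma card_cover3_block_out1_le1 : 1 < #|nbhd e [set v] :\ u| ->
  #|cover3_block e [set u] [set v]| <= 1.
Proof. by move=> cB; apply: card_cover3_block_le1; rewrite // /forced card_setU1. Qed.

Lemma forced_out2 : forced e set0 [set u; v] = nbhd e [set u] :|: nbhd e [set v].
Proof. by rewrite /forced set0U nbhdU. Qed.

Lemma cover3_block_out2_adj : e u v -> cover3_block e set0 [set u; v] = set0.
Proof.
move=> euv; apply: cover3_block_eq0; rewrite -setI_eq0; apply/set0Pn; exists v.
by rewrite in_setI forced_out2 !in_setU !in_nbhd1 !in_set1 euv eqxx !orbT.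
Qed.

Lemma card_cover3_block_out2 : ~~ e u v ->
  #|nbhd e [set u] :|: nbhd e [set v]| = 2 ->
  #|cover3_block e set0 [set u; v]| = #|T| - 4.
Proof.
move=> nuv cF; rewrite card_cover3_block ?set0U ?forced_out2 ?cards2 ?uv -?subnDA //.
rewrite -setI_eq0; apply/eqP/setP => y.
rewrite in_setI !in_setU !in_nbhd1 in_set0 !in_set1.
have nvu : ~~ e v u by rewrite e_sym.
by case: eqVneq => [->|_]; case: eqVneq => [->|_];
  rewrite ?e_irr ?(negbTE nuv) ?(negbTE nvu) ?andbF.
Qed.

Lemma card_cover3_block_out2_le1 : 2 < #|nbhd e [set u] :|: nbhd e [set v]| ->
  #|cover3_block e set0 [set u; v]| <= 1.
Proof. by move=> cF; apply: card_cover3_block_le1; rewrite ?set0U ?forced_out2. Qed.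

End Blocks.

Lemma edge_cover2E (u v x y : T) : vertex_cover e [set u; v] ->
  e x y = [|| (x == u) && e u y, (x == v) && e v y, (y == u) && e u x
            | (y == v) && e v x].
Proof.
move=> /vertex_coverP cov; apply/idP/idP => [exy|].
  have eyx : e y x by rewrite e_sym.
  by case/orP: (cov x y exy); rewrite !inE => /orP [] /eqP E;
    move: exy eyx; rewrite E => exy eyx; rewrite eqxx ?exy ?eyx ?orbT.
by case/or4P => /andP [/eqP -> exy] //; rewrite e_sym.
Qed.

(* Decides a boolean identity between equality tests on [x] and [y] by case
   analysis; [neqs] rewrites the tests between distinct named vertices. *)
Ltac decide_eqs neqs :=
  repeat (match goal with |- context [?x == ?c] =>
            case: (eqVneq x c) => [?|_]; [subst x|] end; rewrite ?eqxx ?neqs /=).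

Lemma K3_of_adj (u v a : T) : vertex_cover e [set u; v] ->
  (forall y, e u y = (y == v) || (y == a)) ->
  (forall y, e v y = (y == u) || (y == a)) -> K3_plus_isolated e.
Proof.
move=> cov Nu Nv.
have := Nu u; rewrite e_irr => /esym/norP [/negbTE uv /negbTE ua].
have := Nv v; rewrite e_irr => /esym/norP [/negbTE vu /negbTE va].
have au : (a == u) = false by rewrite eq_sym.
have av : (a == v) = false by rewrite eq_sym.
exists u, v, a; split; first by rewrite uv ua va.
move=> x y; rewrite (edge_cover2E _ _ cov) !Nu !Nv.
split=> [|/or3P]; [move=> H; apply/or3P; move: H|];
  by decide_eqs (uv, ua, vu, va, au, av).
Qed.

Lemma P4_of_adj_center (u v a b : T) : vertex_cover e [set u; v] ->
  (forall y, e u y = (y == v) || (y == a)) ->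
  (forall y, e v y = (y == u) || (y == b)) ->
  a != v -> b != u -> a != b -> P4_plus_isolated e.
Proof.
move=> cov Nu Nv /negbTE av /negbTE bu /negbTE ab.
have := Nu u; rewrite e_irr => /esym/norP [/negbTE uv /negbTE ua].
have := Nv v; rewrite e_irr => /esym/norP [/negbTE vu /negbTE vb].
have au : (a == u) = false by rewrite eq_sym.
have va : (v == a) = false by rewrite eq_sym.
have ub : (u == b) = false by rewrite eq_sym.
have bv : (b == v) = false by rewrite eq_sym.
have ba : (b == a) = false by rewrite eq_sym.
exists a, u, v, b; split; first by rewrite /= !inE au av ab uv ub vb.
move=> x y; rewrite (edge_cover2E _ _ cov) !Nu !Nv.
split=> [|/or3P]; [move=> H; apply/or3P; move: H|];
  by decide_eqs (uv, ua, vu, vb, av, bu, ab, au, va, ub, bv, ba).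
Qed.

Lemma P4_of_adj_end (u v a b : T) : vertex_cover e [set u; v] ->
  (forall y, e u y = (y == b) || (y == a)) -> (forall y, e v y = (y == b)) ->
  u != v -> a != v -> a != b -> P4_plus_isolated e.
Proof.
move=> cov Nu Nv /negbTE uv /negbTE av /negbTE ab.
have := Nu u; rewrite e_irr => /esym/norP [/negbTE ub /negbTE ua].
have vb : (v == b) = false by rewrite -Nv e_irr.
have vu : (v == u) = false by rewrite eq_sym.
have au : (a == u) = false by rewrite eq_sym.
have va : (v == a) = false by rewrite eq_sym.
have bu : (b == u) = false by rewrite eq_sym.
have bv : (b == v) = false by rewrite eq_sym.
have ba : (b == a) = false by rewrite eq_sym.
exists v, b, u, a; split; first by rewrite /= !inE vb vu va bu ba ua.
move=> x y; rewrite (edge_cover2E _ _ cov) !Nu !Nv.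
split=> [|/or3P]; [move=> H; apply/or3P; move: H|];
  by decide_eqs (uv, ua, vu, vb, av, bu, ab, au, va, ub, bv, ba).
Qed.

Lemma adj_nbhdD1 (u v y : T) :
  e u y = ((y == v) && e u v) || (y \in nbhd e [set u] :\ v).
Proof. by rewrite in_setD1 in_nbhd1; case: (eqVneq y v) => [->|_]; rewrite /= ?orbF. Qed.

Section NoCoverOfSizeOne.
Hypothesis no1 : forall S : {set T}, #|S| <= 1 -> ~~ vertex_cover e S.

Lemma card_nbhdD1_gt0 (u v : T) :
  vertex_cover e [set u; v] -> 0 < #|nbhd e [set v] :\ u|.
Proof.
move=> cov; have := two_le_card_forced (I := [set u]) (O := [set v]) no1 cov.
by rewrite /forced card_setU1.
Qed.

Section TwoCoverCases.
Variables u v : T.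
Hypotheses (uv : u != v) (cov : vertex_cover e [set u; v]) (n6 : 6 <= #|T|).

Let vu : v != u. Proof. by rewrite eq_sym. Qed.
Let cov_vu : vertex_cover e [set v; u]. Proof. by rewrite /= setUC. Qed.

Lemma card_cover3_block_out2_le : #|cover3_block e set0 [set u; v]| <= #|T| - 4.
Proof.
case: (boolP (e u v)) => [euv|nuv]; first by rewrite cover3_block_out2_adj ?cards0.
have := two_le_card_forced (I := set0) (O := [set u; v]) no1.
rewrite set0U forced_out2 => /(_ cov) F_ge2.
case: (ltnP 2 #|nbhd e [set u] :|: nbhd e [set v]|) => [F3|F_le2].
  by have := card_cover3_block_out2_le1 cov F3; lia.
by rewrite card_cover3_block_out2 //; lia.
Qed.

Lemma covers3_both_nonleaf : 1 < #|nbhd e [set v] :\ u| -> 1 < #|nbhd e [set u] :\ v| ->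
  num_covers e 3 <= 2 * #|T| - 3.
Proof.
move=> B2 A2; rewrite (num_covers3_split e u v) card_cover3_block_in2 //.
have := card_cover3_block_out1_le1 cov B2; have := card_cover3_block_out1_le1 cov_vu A2.
have := card_cover3_block_out2_le; lia.
Qed.

Lemma covers3_one_leaf : #|nbhd e [set v] :\ u| = 1 -> 1 < #|nbhd e [set u] :\ v| ->
  P4_plus_isolated e \/ num_covers e 3 <= 2 * #|T| - 3.
Proof.
move=> B1 A2; have t1 := card_cover3_block_out1 uv cov B1.
have t2 := card_cover3_block_out1_le1 cov_vu A2.
rewrite (num_covers3_split e u v) card_cover3_block_in2 //.
case: (boolP (e u v)) => [euv|nuv].
  by right; rewrite cover3_block_out2_adj // cards0; lia.
have nvu : ~~ e v u by rewrite e_sym.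
case: (ltnP 2 #|nbhd e [set u] :|: nbhd e [set v]|) => [F3|F2].
  by right; have := card_cover3_block_out2_le1 cov F3; lia.
left; set A := nbhd e [set u] :\ v in A2 *.
have [b Bb] := cards1P (introT eqP B1).
have AF : A = nbhd e [set u] :|: nbhd e [set v].
  by apply/eqP; rewrite eqEcard (leq_trans F2 A2) /A nbhdD1_id // subsetUl.
have bA : b \in A by rewrite AF -(nbhdD1_id nvu) Bb !inE eqxx orbT.
have /cards1P [a Ab] : #|A :\ b| == 1.
  by apply/eqP; have := cardsD1 b A; rewrite bA; move: F2; rewrite -AF; lia.
have aA : a \in A :\ b by rewrite Ab set11.
have Nu y : e u y = (y == b) || (y == a).
  by rewrite (adj_nbhdD1 u v) (negbTE nuv) andbF -/A -(setD1K bA) Ab !inE.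
have Nv y : e v y = (y == b).
  by rewrite (adj_nbhdD1 v u) (negbTE nvu) andbF Bb inE.
move: aA; rewrite !in_setD1 => /and3P [ab av _].
exact: P4_of_adj_end cov Nu Nv uv av ab.
Qed.

Lemma covers3_two_leaves : #|nbhd e [set v] :\ u| = 1 -> #|nbhd e [set u] :\ v| = 1 ->
  [\/ K3_plus_isolated e, P4_plus_isolated e | 4 * #|T| - 12 <= num_covers e 3].
Proof.
move=> B1 A1; have [b Bb] := cards1P (introT eqP B1).
have [a Aa] := cards1P (introT eqP A1).
case: (boolP (e u v)) => [euv|nuv].
  have Nu y : e u y = (y == v) || (y == a).
    by rewrite (adj_nbhdD1 u v) euv andbT Aa inE.
  have Nv y : e v y = (y == u) || (y == b).
    by rewrite (adj_nbhdD1 v u) e_sym euv andbT Bb inE.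
  case: (eqVneq a b) => [ab|ab]; first by apply: Or31; apply: K3_of_adj cov Nu _; rewrite ab.
  have av : a != v by have := set11 a; rewrite -Aa in_setD1 => /andP [].
  have bu : b != u by have := set11 b; rewrite -Bb in_setD1 => /andP [].
  by apply: Or32; apply: P4_of_adj_center cov Nu Nv av bu ab.
have nvu : ~~ e v u by rewrite e_sym.
have F2 : #|nbhd e [set u] :|: nbhd e [set v]| = 2.
  have := two_le_card_forced (I := set0) (O := [set u; v]) no1.
  rewrite set0U forced_out2 -(nbhdD1_id nuv) -(nbhdD1_id nvu) => /(_ cov).
  by have := cardsUI (nbhd e [set u] :\ v) (nbhd e [set v] :\ u); lia.
apply: Or33; rewrite (num_covers3_split e u v) card_cover3_block_in2 //.
rewrite (card_cover3_block_out1 uv cov B1) (card_cover3_block_out1 vu cov_vu A1).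
by rewrite card_cover3_block_out2 //; lia.
Qed.

End TwoCoverCases.

Lemma covers3_of_two_cover (u v : T) : u != v -> vertex_cover e [set u; v] ->
  6 <= #|T| ->
  [\/ K3_plus_isolated e, P4_plus_isolated e, num_covers e 3 <= 2 * #|T| - 3
    | 4 * #|T| - 12 <= num_covers e 3].
Proof.
move=> + + n6; wlog le_BA : u v / #|nbhd e [set v] :\ u| <= #|nbhd e [set u] :\ v|.
  move=> claim uv cov; case: (leqP #|nbhd e [set v] :\ u| #|nbhd e [set u] :\ v|).
    by move=> le; exact: claim le uv cov.
  by move/ltnW/claim; apply; rewrite 1?eq_sym // /= setUC.
move=> uv cov; have := card_nbhdD1_gt0 cov.
case: (ltnP 1 #|nbhd e [set v] :\ u|) => [B2 _|B1 B0].
  by apply: Or43; exact: covers3_both_nonleaf uv cov n6 B2 (leq_trans B2 le_BA).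
have {B0 B1}B_eq1 : #|nbhd e [set v] :\ u| = 1 by lia.
case: (ltnP 1 #|nbhd e [set u] :\ v|) => [A2|A1].
  by case: (covers3_one_leaf uv cov n6 B_eq1 A2) => [|]; [apply: Or42|apply: Or43].
have {A1}A_eq1 : #|nbhd e [set u] :\ v| = 1 by rewrite B_eq1 in le_BA; lia.
case: (covers3_two_leaves uv cov n6 B_eq1 A_eq1) => [||].
- by apply: Or41.
- by apply: Or42.
- by apply: Or44.
Qed.

End NoCoverOfSizeOne.

End TwoVertexCover.

Lemma lower_bound_nat (r c : nat) : 5 <= r ->
  ((4 * r%:Q - 16) + 36 / (r + 2)%:Q <= c%:Q)%R -> 2 * r <= c.
Proof.
move=> r5 lo; rewrite leqNgt; apply/negP => lt_c.
have c_le : ((c + 1)%:R <= (2 * r)%:R :> rat)%R by rewrite ler_nat addn1.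
have r_ge : ((5 : rat) <= r%:R)%R by rewrite (ler_nat _ 5).
have nat_rat (n : nat) : (n%:Q = n%:R :> rat)%R by [].
rewrite natrD natrM in c_le; move: lo; rewrite !nat_rat natrD.
set x := (36 / _)%R => lo.
have x_def : (x * (r%:R + 2%:R) = 36 :> rat)%R by rewrite /x divfK // gt_eqF //; lra.
(* [c <= 2 r - 1] would force [2 r^2 - 11 r + 6 <= 0], while
   [2 r^2 - 11 r + 5 = (r - 5) (2 r - 1) >= 0]. *)
have : (0 <= (r%:R - 5) * (2 * r%:R - 1) :> rat)%R by apply: mulr_ge0; lra.
nra.
Qed.

Lemma upper_bound_nat (r c : nat) : (c%:Q < 4 * r%:Q - 8)%R -> c + 8 < 4 * r.
Proof.
move=> hi; rewrite ltnNge; apply/negP => le_c.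
have nat_rat (n : nat) : (n%:Q = n%:R :> rat)%R by [].
have : ((4 * r)%:R <= (c + 8)%:R :> rat)%R by rewrite ler_nat.
by rewrite natrD natrM; move: hi; rewrite !nat_rat; lra.
Qed.

Theorem mainTheorem12 (r : nat) (e : rel 'I_r.+1) :
  5 <= r ->
  simple_graph e ->
  (forall S : {set 'I_r.+1}, #|S| = 1 -> ~~ vertex_cover e S) ->
  ((4 * r%:Q - 16) + 36 / (r + 2)%:Q <= (num_covers e 3)%:Q)%R ->
  ((num_covers e 3)%:Q < 4 * r%:Q - 8)%R ->
  K3_plus_isolated e \/ P4_plus_isolated e.
Proof.
move=> r5 [e_sym e_irr] no_cover1 /(lower_bound_nat r5) lo /upper_bound_nat hi.
have no_small_cover (S : {set 'I_r.+1}) : #|S| <= 1 -> ~~ vertex_cover e S.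
  rewrite leq_eqVlt ltnS leqn0 => /orP [/eqP|/eqP/cards0_eq ->]; first exact: no_cover1.
  apply: contra (no_cover1 [set ord0] (cards1 _)); apply: vertex_coverS.
  exact: sub0set.
case: (boolP [exists S : {set 'I_r.+1}, (#|S| == 2) && vertex_cover e S]).
  case/existsP => S /andP [/cards2P [u [v [uv ->]]] cov].
  have := covers3_of_two_cover e_sym e_irr no_small_cover uv cov.
  by rewrite card_ord => /(_ r5) [| | |]; [left|right|lia|lia].
move/existsPn => no_cover2.
have no_cover_lt3 (S : {set 'I_r.+1}) : #|S| < 3 -> ~~ vertex_cover e S.
  rewrite ltnS leq_eqVlt => /orP [/eqP cS|]; last exact: no_small_cover.
  by move: (no_cover2 S); rewrite cS.
by have := leq_trans lo (num_covers_le_exp2 no_cover_lt3); lia.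
Qed.
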